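(* Let $n\in\mathbb{N}$, $y\in\{-1,+1\}^n$, $Y=\operatorname{diag}(y)$, let $K,\tilde K\in\mathbb{R}^{n\times n}$ be symmetric positive semidefinite matrices, $C>0$, $\gamma>0$, and define $F(\alpha)=\frac12\alpha^\top YKY\alpha-\mathbf 1^\top\alpha$ and $\tilde F(\tilde\alpha)=\frac12\tilde\alpha^\top\tilde K\tilde\alpha$. (i) If $(\alpha_1,\tilde\alpha_1)$ and $(\alpha_2,\tilde\alpha_2)$ are solutions of $$\min_{\alpha,\tilde\alpha\in\mathbb{R}^n}F(\alpha)+\tfrac1\gamma\tilde F(\tilde\alpha)\quad\text{s.t. } y^\top\alpha=0,\ \mathbf 1^\top\tilde\alpha=0,\ 0\le\alpha_i\le C+\tilde\alpha_i\ \forall i,$$ then $\alpha_1-\alpha_2\in\operatorname{Null}(YKY)\cap\mathbf 1^\perp\cap y^\perp$ and $\tilde\alpha_1-\tilde\alpha_2\in\operatorname{Null}(\tilde K)\cap\mathbf 1^\perp$. (ii) For $c\in\mathbb{R}^n_{\ge0}$, if $\alpha_1$ and $\alpha_2$ are solutions of $\min_\alpha F(\alpha)$ s.t. $y^\top\alpha=0$, $0\le\alpha_i\le c_i$ for all $i$, then $\alpha_1-\alpha_2\in\operatorname{Null}(YKY)\cap\mathbf 1^\perp\cap y^\perp$.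
   Context: $\mathbf 1$ is the all-ones vector; $v^\perp$ denotes the orthogonal complement of $v$ in $\mathbb{R}^n$. (These are the dual problems of SVM+ and of the weighted SVM, with $K$ and $\tilde K$ the kernel matrices of the decision and correcting features.) *)

From mathcomp Require Import all_boot all_order all_algebra.
Set Implicit Arguments. Unset Strict Implicit. Unset Printing Implicit Defensive.
Import Order.TTheory GRing.Theory Num.Theory.
Local Open Scope ring_scope.

Definition dotv (R : ringType) (n : nat) (u v : 'cV[R]_n) : R := (u^T *m v) 0 0.

Definition psd (R : numDomainType) (n : nat) (M : 'M[R]_n) : Prop :=
  M^T = M /\ forall v : 'cV[R]_n, 0 <= dotv v (M *m v).

Definition ones (R : ringType) (n : nat) : 'cV[R]_n := const_mx 1.

Definition diagY (R : ringType) (n : nat) (y : 'cV[R]_n) : 'M[R]_n := diag_mx y^T.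

Definition in_null (R : ringType) (n : nat) (M : 'M[R]_n) (v : 'cV[R]_n) : Prop :=
  M *m v = 0.

Definition in_perp (R : ringType) (n : nat) (u v : 'cV[R]_n) : Prop :=
  dotv u v = 0.

Definition Fobj (R : realFieldType) (n : nat) (y : 'cV[R]_n) (K : 'M[R]_n)
  (a : 'cV[R]_n) : R :=
  2^-1 * dotv a (diagY y *m K *m diagY y *m a) - dotv (ones R n) a.

Definition Ftobj (R : realFieldType) (n : nat) (Kt : 'M[R]_n) (at_ : 'cV[R]_n) : R :=
  2^-1 * dotv at_ (Kt *m at_).

Definition feas_plus (R : realFieldType) (n : nat) (y : 'cV[R]_n) (C : R)
  (a at_ : 'cV[R]_n) : Prop :=
  dotv y a = 0 /\ dotv (ones R n) at_ = 0 /\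
  forall i, 0 <= a i 0 /\ a i 0 <= C + at_ i 0.

Definition sol_plus (R : realFieldType) (n : nat) (y : 'cV[R]_n) (K Kt : 'M[R]_n)
  (C gamma : R) (a at_ : 'cV[R]_n) : Prop :=
  feas_plus y C a at_ /\
  forall b bt, feas_plus y C b bt ->
    Fobj y K a + gamma^-1 * Ftobj Kt at_ <= Fobj y K b + gamma^-1 * Ftobj Kt bt.

Definition feas_w (R : realFieldType) (n : nat) (y c a : 'cV[R]_n) : Prop :=
  dotv y a = 0 /\ forall i, 0 <= a i 0 /\ a i 0 <= c i 0.

Definition sol_w (R : realFieldType) (n : nat) (y : 'cV[R]_n) (K : 'M[R]_n)
  (c a : 'cV[R]_n) : Prop :=
  feas_w y c a /\ forall b, feas_w y c b -> Fobj y K a <= Fobj y K b.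

From mathcomp Require Import all_boot all_order all_algebra.
From mathcomp Require Import ring lra.
Import Order.TTheory GRing.Theory Num.Theory.
Local Open Scope ring_scope.
Set Implicit Arguments. Unset Strict Implicit.

(* Both problems minimise a convex quadratic [q(x) = x^T M x / 2 - l^T x]
   (M symmetric psd) over a convex set.  The midpoint of two minimisers is
   feasible and [q] at the midpoint is the mean of the two values minus
   [d^T M d / 8], d the difference; minimality forces [d^T M d = 0], hence
   [M d = 0] since M is psd, and then [q(a1) = q(a2) - l^T d] gives
   [l^T d = 0].  The remaining orthogonality comes from the equality
   constraints of the problems. *)

Section Quadratic.
Variables (R : realFieldType) (n : nat).
Implicit Types (u v w l : 'cV[R]_n) (M N : 'M[R]_n).

Lemma dotvDl u v w : dotv (u + v) w = dotv u w + dotv v w.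
Proof. by rewrite /dotv linearD /= mulmxDl mxE. Qed.

Lemma dotvDr u v w : dotv u (v + w) = dotv u v + dotv u w.
Proof. by rewrite /dotv mulmxDr mxE. Qed.

Lemma dotvZl (a : R) u v : dotv (a *: u) v = a * dotv u v.
Proof. by rewrite /dotv linearZ /= -scalemxAl mxE. Qed.

Lemma dotvZr (a : R) u v : dotv u (a *: v) = a * dotv u v.
Proof. by rewrite /dotv -scalemxAr mxE. Qed.

Lemma dotvNl u v : dotv (- u) v = - dotv u v.
Proof. by rewrite -scaleN1r dotvZl mulN1r. Qed.

Lemma dotvNr u v : dotv u (- v) = - dotv u v.
Proof. by rewrite -scaleN1r dotvZr mulN1r. Qed.

Lemma dotvBr u v w : dotv u (v - w) = dotv u v - dotv u w.
Proof. by rewrite dotvDr dotvNr. Qed.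

Lemma dotv0l v : dotv 0 v = 0.
Proof. by rewrite /dotv trmx0 mul0mx mxE. Qed.

Lemma dotvC u v : dotv u v = dotv v u.
Proof. by rewrite /dotv -(trmxK (u^T *m v)) trmx_mul trmxK mxE. Qed.

Lemma dotv_trmx (A : 'M[R]_n) u v : dotv u (A^T *m v) = dotv (A *m u) v.
Proof. by rewrite /dotv mulmxA -trmx_mul. Qed.

Lemma dotv_sym M u v : M^T = M -> dotv u (M *m v) = dotv (M *m u) v.
Proof. by move=> MT; rewrite -{1}MT dotv_trmx. Qed.

Lemma dotv_self u : dotv u u = \sum_i u i 0 ^+ 2.
Proof. by rewrite /dotv mxE; apply: eq_bigr => i _; rewrite mxE expr2. Qed.

Lemma dotv_self_ge0 u : 0 <= dotv u u.
Proof. by rewrite dotv_self sumr_ge0 // => i _; apply: sqr_ge0. Qed.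

Lemma dotv_self_eq0 u : dotv u u = 0 -> u = 0.
Proof.
rewrite dotv_self => /psumr_eq0P sq0; apply/matrixP => i j.
rewrite (ord1 j) mxE; apply/eqP; rewrite -sqrf_eq0; apply/eqP.
by apply: sq0 => // k _; apply: sqr_ge0.
Qed.

Lemma psd0 : psd (0 : 'M[R]_n).
Proof. by split=> [|v]; rewrite ?trmx0 // mul0mx /dotv mulmx0 mxE. Qed.

Lemma psd_congr (P K : 'M[R]_n) : psd K -> psd (P^T *m K *m P).
Proof.
case=> KT Kge0; split=> [|v]; first by rewrite !trmx_mul trmxK KT mulmxA.
by rewrite -!mulmxA dotv_trmx; apply: Kge0.
Qed.

Lemma psd_form_eq0 M d : psd M -> dotv d (M *m d) = 0 -> M *m d = 0.
Proof.
case=> MT Mge0 d0; set w := M *m d.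
have dMw : dotv d (M *m w) = dotv w w by rewrite dotv_sym.
(* The form at [d + t w] is [2 t |w|^2 + t^2 w^T M w]; for small [t < 0] it is
   negative unless [w = 0]. *)
have ge0_t (t : R) : 0 <= 2 * t * dotv w w + t ^+ 2 * dotv w (M *m w).
  have := Mge0 (d + t *: w).
  rewrite mulmxDr -scalemxAr !dotvDl !dotvDr !dotvZl !dotvZr d0 dMw -/w.
  by rewrite (dotv_sym _ d) // -/w; lra.
have b0 := dotv_self_ge0 w; have a0 := Mge0 w.
apply: dotv_self_eq0.
set a := dotv w (M *m w) in ge0_t a0; set b := dotv w w in ge0_t b0 *.
set t := - b / (a + 1).
have t_a : t * a + t = - b by rewrite /t; field; apply: lt0r_neq0; lra.
by have := ge0_t t; nra.
Qed.

Definition quad M l x := 2^-1 * dotv x (M *m x) - dotv l x.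

Lemma quad_midpoint M l a1 a2 : M^T = M ->
  quad M l (2^-1 *: (a1 + a2)) =
  2^-1 * (quad M l a1 + quad M l a2) - 8^-1 * dotv (a1 - a2) (M *m (a1 - a2)).
Proof.
move=> MT; have a21 : dotv a2 (M *m a1) = dotv a1 (M *m a2).
  by rewrite dotv_sym // dotvC.
rewrite /quad -!scalemxAr !mulmxDr !mulmxN !dotvDl !dotvDr !dotvNl !dotvNr
  !dotvZl !dotvZr a21 (dotvDl a1 a2) (dotvDr a1) (dotvDr a2) a21 (dotvDr l).
lra.
Qed.

Lemma quad_shift_null M l a1 a2 : M^T = M -> M *m (a1 - a2) = 0 ->
  quad M l a1 = quad M l a2 - dotv l (a1 - a2).
Proof.
move=> MT null_d.
have Ma : M *m a1 = M *m a2 by apply/eqP; rewrite -subr_eq0 -mulmxBr null_d.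
have a12 : dotv a1 (M *m a2) = dotv a2 (M *m a2) by rewrite dotv_sym // Ma dotvC.
by rewrite /quad Ma a12 dotvBr; ring.
Qed.

Lemma quad2_minimizers M N l m (w : R) (S : 'cV[R]_n -> 'cV[R]_n -> Prop)
    a1 b1 a2 b2 :
  psd M -> psd N -> 0 < w ->
  (forall a b a' b', S a b -> S a' b' ->
     S (2^-1 *: (a + a')) (2^-1 *: (b + b'))) ->
  S a1 b1 -> (forall a b, S a b ->
     quad M l a1 + w * quad N m b1 <= quad M l a + w * quad N m b) ->
  S a2 b2 -> (forall a b, S a b ->
     quad M l a2 + w * quad N m b2 <= quad M l a + w * quad N m b) ->
  [/\ M *m (a1 - a2) = 0, N *m (b1 - b2) = 0
    & dotv l (a1 - a2) + w * dotv m (b1 - b2) = 0].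
Proof.
move=> psdM psdN w0 S_mid S1 min1 S2 min2.
have [[MT Mge0] [NT Nge0]] := (psdM, psdN).
have := min1 _ _ (S_mid _ _ _ _ S1 S2); have := min1 _ _ S2; have := min2 _ _ S1.
rewrite !quad_midpoint //.
have := Mge0 (a1 - a2); have := Nge0 (b1 - b2).
set dM := dotv _ (M *m _); set dN := dotv _ (N *m _).
move=> dN0 dM0 le21 le12 le1mid.
have wdN0 : 0 <= w * dN by rewrite mulr_ge0 // ltW.
have dM_eq0 : dM = 0 by nra.
have dN_eq0 : dN = 0.
  have /eqP : w * dN = 0 by nra.
  by rewrite mulf_eq0 gt_eqF //= => /eqP.
have nullM := psd_form_eq0 psdM dM_eq0; have nullN := psd_form_eq0 psdN dN_eq0.
split=> //; move: le12 le21.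
by rewrite (quad_shift_null _ MT nullM) (quad_shift_null _ NT nullN); nra.
Qed.

Lemma quad_minimizers M l (S : 'cV[R]_n -> Prop) a1 a2 :
  psd M -> (forall a a', S a -> S a' -> S (2^-1 *: (a + a'))) ->
  S a1 -> (forall a, S a -> quad M l a1 <= quad M l a) ->
  S a2 -> (forall a, S a -> quad M l a2 <= quad M l a) ->
  M *m (a1 - a2) = 0 /\ dotv l (a1 - a2) = 0.
Proof.
move=> psdM S_mid S1 min1 S2 min2.
pose S0 a (b : 'cV[R]_n) := S a /\ b = 0.
have quad0 : quad 0 0 (0 : 'cV[R]_n) = 0 by rewrite /quad mul0mx !dotv0l; lra.
have min0 a : (forall a', S a' -> quad M l a <= quad M l a') ->
    forall a' b', S0 a' b' ->
    quad M l a + 1 * quad 0 0 0 <= quad M l a' + 1 * quad 0 0 b'.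
  by move=> mina a' b' [Sa' ->]; rewrite quad0 mulr0 !addr0 mina.
have S0_mid a b a' b' :
    S0 a b -> S0 a' b' -> S0 (2^-1 *: (a + a')) (2^-1 *: (b + b')).
  by move=> [Sa ->] [Sa' ->]; rewrite addr0 scaler0; split; first exact: S_mid.
have [nullM _] := quad2_minimizers psdM psd0 ltr01 S0_mid (conj S1 erefl)
  (min0 _ min1) (conj S2 erefl) (min0 _ min2).
by rewrite dotv0l mulr0 addr0.
Qed.

Lemma dotv_sub_eq0 u v w : dotv u v = 0 -> dotv u w = 0 -> dotv u (v - w) = 0.
Proof. by move=> uv0 uw0; rewrite dotvBr uv0 uw0 subr0. Qed.

End Quadratic.

Section DualFeasibility.
Variables (R : realFieldType) (n : nat) (y : 'cV[R]_n).

Lemma feas_plus_midpoint (C : R) a at_ a' at' :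
  feas_plus y C a at_ -> feas_plus y C a' at' ->
  feas_plus y C (2^-1 *: (a + a')) (2^-1 *: (at_ + at')).
Proof.
move=> [ya [oa box]] [ya' [oa' box']]; rewrite /feas_plus !dotvZr !dotvDr.
rewrite ya ya' oa oa' addr0 mulr0; do 2!split=> //.
by move=> i; rewrite !mxE; have := box i; have := box' i; lra.
Qed.

Lemma feas_w_midpoint (c a a' : 'cV[R]_n) :
  feas_w y c a -> feas_w y c a' -> feas_w y c (2^-1 *: (a + a')).
Proof.
move=> [ya box] [ya' box']; rewrite /feas_w dotvZr dotvDr ya ya' addr0 mulr0.
by split=> // i; rewrite !mxE; have := box i; have := box' i; lra.
Qed.

End DualFeasibility.

Theorem proposition3 (R : realFieldType) (n : nat) (y : 'cV[R]_n)
  (K Kt : 'M[R]_n) (C gamma : R) :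
  (forall i, y i 0 = 1 \/ y i 0 = -1) ->
  psd K -> psd Kt -> 0 < C -> 0 < gamma ->
  (forall a1 at1 a2 at2,
      sol_plus y K Kt C gamma a1 at1 -> sol_plus y K Kt C gamma a2 at2 ->
      (in_null (diagY y *m K *m diagY y) (a1 - a2) /\
       in_perp (ones R n) (a1 - a2) /\ in_perp y (a1 - a2)) /\
      (in_null Kt (at1 - at2) /\ in_perp (ones R n) (at1 - at2))) /\
  (forall c : 'cV[R]_n, (forall i, 0 <= c i 0) ->
    forall a1 a2, sol_w y K c a1 -> sol_w y K c a2 ->
      in_null (diagY y *m K *m diagY y) (a1 - a2) /\
      in_perp (ones R n) (a1 - a2) /\ in_perp y (a1 - a2)).
Proof.
move=> _ psdK psdKt _; rewrite -invr_gt0 => gammaV_gt0.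
set M := diagY y *m K *m diagY y.
have YT : (diagY y)^T = diagY y := tr_diag_mx y^T.
have psdM : psd M by rewrite /M -{1}YT; apply: psd_congr.
have Ftobj_quad a : Ftobj Kt a = quad Kt 0 a by rewrite /quad dotv0l subr0.
split.
- move=> a1 at1 a2 at2 [feas1 min1] [feas2 min2].
  have min_quad a at_ : (forall b bt, feas_plus y C b bt ->
      Fobj y K a + gamma^-1 * Ftobj Kt at_ <=
      Fobj y K b + gamma^-1 * Ftobj Kt bt) ->
      forall b bt, feas_plus y C b bt ->
      quad M (ones R n) a + gamma^-1 * quad Kt 0 at_ <=
      quad M (ones R n) b + gamma^-1 * quad Kt 0 bt.
    by move=> mina b bt /mina; rewrite !Ftobj_quad.
  have [nullM nullKt] := quad2_minimizers psdM psdKt gammaV_gt0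
    (@feas_plus_midpoint _ _ y C) feas1 (min_quad _ _ min1)
    feas2 (min_quad _ _ min2).
  rewrite dotv0l mulr0 addr0 => ones_d.
  case: feas1 feas2 => [ya1 [oa1 _]] [ya2 [oa2 _]].
  by do !split=> //; apply: dotv_sub_eq0.
- move=> c _ a1 a2 [feas1 min1] [feas2 min2].
  have [nullM ones_d] := quad_minimizers psdM (@feas_w_midpoint _ _ y c)
    feas1 min1 feas2 min2.
  case: feas1 feas2 => [ya1 _] [ya2 _].
  by do !split=> //; apply: dotv_sub_eq0.
Qed.
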